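(* Let $n \ge 1$ and let $S \subset \mathbb{C}^n$ be a unitary 2-design with $s = |S|$ elements. Then the tensor rank (over $\mathbb{C}$) of the matrix multiplication tensor $\mathrm{MM}_n$ is at most $s(s-1)(s-2)+1$.
   Context: For $u, v \in \mathbb{C}^n$, $|u\rangle\langle v|$ denotes the $n\times n$ matrix whose $(i,j)$ entry is $u_i \overline{v_j}$. Let $e_1,\dots,e_n$ be the standard basis of $\mathbb{C}^n$ and $E_{ab} = |e_a\rangle\langle e_b|$. The matrix multiplication tensor is $\mathrm{MM}_n = \sum_{a,b,c=1}^n E_{ab}\otimes E_{bc}\otimes E_{ca} \in \mathbb{C}^{n\times n}\otimes\mathbb{C}^{n\times n}\otimes\mathbb{C}^{n\times n}$ (equivalently, the tensor with $\langle \mathrm{MM}_n, A\otimes B\otimes C\rangle = \operatorname{tr}(ABC)$). The tensor rank of a tensor $T \in V_1\otimes V_2\otimes V_3$ is the least number $r$ such that $T$ is a sum of $r$ tensors of the form $x\otimes y\otimes z$ with $x\in V_1, y\in V_2, z \in V_3$. A finite set $S = \{w_1,\dots,w_s\} \subset \mathbb{C}^n$ is a unitary 2-design if $\sum_{i=1}^s w_i = 0$ and $\frac{1}{s}\sum_{i=1}^s |w_i\rangle\langle w_i| = \frac{1}{n}\mathbf{1}$, where $\mathbf{1}$ is the $n\times n$ identity matrix. *)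

From HB Require Import structures.
From mathcomp Require Import all_boot all_order all_algebra.
Set Implicit Arguments. Unset Strict Implicit. Unset Printing Implicit Defensive.
Import Order.TTheory GRing.Theory Num.Theory.
Local Open Scope ring_scope.

Definition ketbra (C : numClosedFieldType) (n : nat) (u v : 'cV[C]_n) : 'M[C]_n :=
  \matrix_(i, j) (u i 0 * (v j 0)^*).

Definition unitary_2design (C : numClosedFieldType) (n : nat) (S : seq 'cV[C]_n) : Prop :=
  [/\ uniq S,
      \sum_(w <- S) w = 0
    & (size S)%:R^-1 *: \sum_(w <- S) ketbra w w = n%:R^-1 *: (1%:M : 'M[C]_n)].

(* A tensor in M_n(C) (x) M_n(C) (x) M_n(C), in coordinates w.r.t. the
   basis E_ij (x) E_kl (x) E_pq: T i j k l p q. *)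
Definition tensor3 (C : Type) (n : nat) :=
  'I_n -> 'I_n -> 'I_n -> 'I_n -> 'I_n -> 'I_n -> C.

Definition rank1 (C : numClosedFieldType) (n : nat) (x y z : 'M[C]_n) : tensor3 C n :=
  fun i j k l p q => x i j * y k l * z p q.

Definition MM (C : numClosedFieldType) (n : nat) : tensor3 C n :=
  fun i j k l p q =>
    \sum_(a < n) \sum_(b < n) \sum_(c < n)
      rank1 (delta_mx a b) (delta_mx b c) (delta_mx c a) i j k l p q.

Definition tensor_rank_le (C : numClosedFieldType) (n : nat) (T : tensor3 C n) (N : nat) : Prop :=
  exists r : nat, (r <= N)%N /\
    exists x y z : 'I_r -> 'M[C]_n,
      forall i j k l p q,
        T i j k l p q = \sum_(t < r) rank1 (x t) (y t) (z t) i j k l p q.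

From HB Require Import structures.
From mathcomp Require Import all_boot all_order all_algebra.
From mathcomp Require Import ring zify.
Set Implicit Arguments. Unset Strict Implicit. Unset Printing Implicit Defensive.
Import Order.TTheory GRing.Theory Num.Theory.
Local Open Scope ring_scope.

(* Put X_ab := |w_a><w_a - w_b|.  Expanding X_ab (x) X_bc (x) X_ca and summing
   over all a, b, c, every mixed term dies because some index occurs in a single
   unconjugated factor w, whose sum is 0, while the two remaining terms contract
   via sum_a |w_a><w_a| = (s/n) Id.  Hence
     sum_{a,b,c} X_ab (x) X_bc (x) X_ca = (s/n)^3 (Id (x) Id (x) Id - MM_n).
   As X_aa = 0, only triples of pairwise distinct indices contribute, so MM_n is
   a sum of 1 + s(s-1)(s-2) rank-one tensors. *)

Section TensorRank.
Variables (C : numClosedFieldType) (n : nat).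
Implicit Types (T : tensor3 C n) (x y z : 'M[C]_n).

Lemma eq_tensor_rank_le T T' N :
  (forall i j k l p q, T i j k l p q = T' i j k l p q) ->
  tensor_rank_le T' N -> tensor_rank_le T N.
Proof.
move=> eqTT' [r [le_rN [x [y [z defT']]]]]; exists r; split=> //.
by exists x, y, z => i j k l p q; rewrite eqTT' defT'.
Qed.

Lemma tensor_rank_le_widen T N N' :
  (N <= N')%N -> tensor_rank_le T N -> tensor_rank_le T N'.
Proof.
move=> le_NN' [r [le_rN decT]]; exists r; split=> //; exact: leq_trans le_NN'.
Qed.

Lemma tensor_rank_le_rank1 x y z : tensor_rank_le (rank1 x y z) 1.
Proof.
exists 1%N; split=> //; exists (fun=> x), (fun=> y), (fun=> z).
by move=> i j k l p q; rewrite big_ord1.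
Qed.

Lemma tensor_rank_le0 : @tensor_rank_le C n (fun _ _ _ _ _ _ => 0) 0.
Proof.
exists 0%N; split=> //; exists (fun=> 0), (fun=> 0), (fun=> 0).
by move=> i j k l p q; rewrite big_ord0.
Qed.

Lemma tensor_rank_leZ (c : C) T N :
  tensor_rank_le T N -> tensor_rank_le (fun i j k l p q => c * T i j k l p q) N.
Proof.
move=> [r [le_rN [x [y [z defT]]]]]; exists r; split=> //.
exists (fun t => c *: x t), y, z => i j k l p q.
by rewrite defT mulr_sumr; apply: eq_bigr => t _; rewrite /rank1 mxE !mulrA.
Qed.

Lemma tensor_rank_leD T1 T2 N1 N2 :
  tensor_rank_le T1 N1 -> tensor_rank_le T2 N2 ->
  tensor_rank_le (fun i j k l p q => T1 i j k l p q + T2 i j k l p q) (N1 + N2).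
Proof.
move=> [r1 [le_r1 [x1 [y1 [z1 defT1]]]]] [r2 [le_r2 [x2 [y2 [z2 defT2]]]]].
pose glue (f1 : 'I_r1 -> 'M[C]_n) (f2 : 'I_r2 -> 'M[C]_n) (t : 'I_(r1 + r2)) :=
  match split t with inl t1 => f1 t1 | inr t2 => f2 t2 end.
exists (r1 + r2)%N; split; first exact: leq_add.
exists (glue x1 x2), (glue y1 y2), (glue z1 z2) => i j k l p q.
rewrite big_split_ord defT1 defT2 /glue.
congr (_ + _); apply: eq_bigr => t _.
  by rewrite (unsplitK (inl t : _ + 'I_r2)).
by rewrite (unsplitK (inr t : 'I_r1 + _)).
Qed.

Lemma tensor_rank_le_sum m (T : 'I_m -> tensor3 C n) N :
  (forall a, tensor_rank_le (T a) N) ->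
  tensor_rank_le (fun i j k l p q => \sum_(a < m) T a i j k l p q) (m * N).
Proof.
elim: m T => [|m IHm] T rkT.
  by apply: eq_tensor_rank_le tensor_rank_le0 => *; rewrite big_ord0.
rewrite mulSn; apply: eq_tensor_rank_le
  (tensor_rank_leD (rkT ord0) (IHm _ (fun a => rkT (lift ord0 a)))).
by move=> i j k l p q; rewrite big_ord_recl.
Qed.

End TensorRank.

Lemma MM_entry (C : numClosedFieldType) n (i j k l p q : 'I_n) :
  @MM C n i j k l p q = ((j == k) * (l == p) * (q == i))%:R.
Proof.
rewrite /MM /rank1 (bigD1 q) //= [X in _ + X]big1 ?addr0; last first.
  move=> a /negbTE neq_aq; apply: big1 => b _; apply: big1 => c _.
  by rewrite !mxE [q == a]eq_sym neq_aq andbF !mulr0.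
rewrite (bigD1 j) //= [X in _ + X]big1 ?addr0; last first.
  move=> b /negbTE neq_bj; apply: big1 => c _.
  by rewrite !mxE [j == b]eq_sym neq_bj andbF !mul0r.
rewrite (bigD1 l) //= [X in _ + X]big1 ?addr0; last first.
  by move=> c /negbTE neq_cl; rewrite !mxE [l == c]eq_sym neq_cl andbF mulr0 mul0r.
rewrite !mxE !eqxx !andbT (eq_sym j k) (eq_sym l p) (eq_sym q i) !natrM; ring.
Qed.

Lemma sum_triple_distinct (R : nmodType) m (F : 'I_m -> 'I_m -> 'I_m -> R) :
  (forall a c, F a a c = 0) -> (forall a b, F a b b = 0) ->
  (forall a b, F a b a = 0) ->
  \sum_(a < m) \sum_(b < m) \sum_(c < m) F a b c =
  \sum_(a < m) \sum_(b < m.-1) \sum_(c < m.-1.-1)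
    F a (lift a b) (lift a (lift b c)).
Proof.
move=> Faac Fabb Faba; apply: eq_bigr => a _.
rewrite (bigD1_ord a) //= big1 ?add0r; last by move=> c _; rewrite Faac.
apply: eq_bigr => b _.
by rewrite (bigD1_ord a) //= Faba add0r (bigD1_ord b) //= Fabb add0r.
Qed.

Section TwoDesignIdentity.
Variables (C : numClosedFieldType) (n : nat) (I : finType).
Variables (w : I -> 'cV[C]_n) (kappa : C).
Hypothesis sum_w : \sum_a w a = 0.
Hypothesis sum_ketbra_w : \sum_a ketbra (w a) (w a) = kappa%:M.

Definition ketbra_diff a b := ketbra (w a) (w a - w b).

Lemma ketbra_diff_entry a b i j :
  ketbra_diff a b i j = w a i 0 * ((w a j 0)^* - (w b j 0)^*).
Proof. by rewrite !mxE rmorphB. Qed.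

Lemma ketbra_diff_id a : ketbra_diff a a = 0.
Proof. by apply/matrixP => i j; rewrite ketbra_diff_entry subrr mulr0 mxE. Qed.

Lemma sum_w_entry i : \sum_a w a i 0 = 0.
Proof. by rewrite -summxE sum_w mxE. Qed.

Lemma sum_w_moment i j : \sum_a w a i 0 * (w a j 0)^* = kappa * (i == j)%:R.
Proof.
have := congr1 (fun M : 'M[C]_n => M i j) sum_ketbra_w.
by rewrite /= summxE mxE mulr_natr => <-; apply: eq_bigr => a _; rewrite mxE.
Qed.

Lemma sum3_separable (f g h : I -> C) :
  \sum_a \sum_b \sum_c f a * g b * h c =
  (\sum_a f a) * (\sum_b g b) * (\sum_c h c).
Proof.
rewrite !big_distrl; apply: eq_bigr => a _ /=.
rewrite -mulrA big_distrl big_distrr; apply: eq_bigr => b _ /=.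
by rewrite mulrA big_distrr.
Qed.

Lemma sum_ketbra_diff_cycle i j k l p q :
  \sum_a \sum_b \sum_c
    rank1 (ketbra_diff a b) (ketbra_diff b c) (ketbra_diff c a) i j k l p q =
  kappa ^+ 3 * (rank1 1%:M 1%:M 1%:M i j k l p q - @MM C n i j k l p q).
Proof.
pose u a x := w a x 0; pose v a x := (w a x 0)^*.
have expand a b c :
  rank1 (ketbra_diff a b) (ketbra_diff b c) (ketbra_diff c a) i j k l p q =
    u a i * v a j * (u b k * v b l) * (u c p * v c q)
  - u a i * v a q * (u b k * v b j) * (u c p * v c l)
  - u a i * v a j * v a q * (u b k * v b l) * u c p
  - u a i * v a j * u b k * (v c l * u c p * v c q)
  - u a i * (v b j * u b k * v b l) * (u c p * v c q)
  + u a i * v a j * v a q * u b k * (v c l * u c p)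
  + u a i * v a q * (v b j * u b k * v b l) * u c p
  + u a i * (v b j * u b k) * (v c l * u c p * v c q).
  by rewrite /rank1 !ketbra_diff_entry /u /v; ring.
under eq_bigr => a _ do under eq_bigr => b _ do
  rewrite (eq_bigr _ (fun c _ => expand a b c)) !(big_split, sumrN) /=.
under eq_bigr => a _ do rewrite !(big_split, sumrN) /=.
rewrite !(big_split, sumrN) /= !sum3_separable /u /v !sum_w_entry !mulr0 !mul0r.
rewrite !sum_w_moment MM_entry /rank1 !mxE !natrM (eq_sym q) (eq_sym j) (eq_sym l).
ring.
Qed.

End TwoDesignIdentity.

Lemma MM_eq_ketbra_diff_cycles (C : numClosedFieldType) n m
    (w : 'I_m -> 'cV[C]_n) (kappa : C) :
  \sum_a w a = 0 -> \sum_a ketbra (w a) (w a) = kappa%:M -> kappa != 0 ->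
  forall i j k l p q, @MM C n i j k l p q =
    rank1 1%:M 1%:M 1%:M i j k l p q
    - kappa ^- 3 * \sum_(a < m) \sum_(b < m.-1) \sum_(c < m.-1.-1)
        rank1 (ketbra_diff w a (lift a b))
              (ketbra_diff w (lift a b) (lift a (lift b c)))
              (ketbra_diff w (lift a (lift b c)) a) i j k l p q.
Proof.
move=> sum_w sum_ketbra_w kappa_neq0 i j k l p q.
pose F a b c :=
  rank1 (ketbra_diff w a b) (ketbra_diff w b c) (ketbra_diff w c a) i j k l p q.
rewrite -(sum_triple_distinct (F := F));
  try by move=> a b; rewrite /F /rank1 ketbra_diff_id !mxE ?(mul0r, mulr0).
rewrite /F (sum_ketbra_diff_cycle sum_w sum_ketbra_w).
by rewrite mulrA mulVf ?expf_neq0 // mul1r opprB addrC subrK.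
Qed.

Lemma unitary_2design_size_gt0 (C : numClosedFieldType) n (S : seq 'cV[C]_n) :
  (0 < n)%N -> unitary_2design S -> (0 < size S)%N.
Proof.
move=> n_gt0 [_ _]; case: S => [|//]; rewrite big_nil scaler0.
move/(congr1 (fun M : 'M[C]_n => M (Ordinal n_gt0) (Ordinal n_gt0))).
by rewrite !mxE eqxx mulr1 => /esym/eqP; rewrite invr_eq0 pnatr_eq0 eqn0Ngt n_gt0.
Qed.

Theorem theorem1 (C : numClosedFieldType) (n : nat) (S : seq 'cV[C]_n) :
  (1 <= n)%N ->
  unitary_2design S ->
  tensor_rank_le (@MM C n) ((size S) * (size S - 1) * (size S - 2) + 1)%N.
Proof.
move=> n_gt0 design2S; case: (design2S) => _ sumS designS.
set s := size S in designS *.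
pose w (a : 'I_s) := S`_a.
have sum_w : \sum_a w a = 0 by rewrite -[RHS]sumS (big_nth 0) big_mkord.
have s_gt0 : (0 < s)%N by apply: unitary_2design_size_gt0 n_gt0 _.
have sum_ketbra_w : \sum_a ketbra (w a) (w a) = (s%:R / n%:R)%:M.
  move/(congr1 (fun M => s%:R *: M)): designS.
  rewrite !scalerA mulfV ?pnatr_eq0 -?lt0n // scale1r scalemx1 => <-.
  by rewrite (big_nth 0) big_mkord.
have kappa_neq0 : s%:R / n%:R != 0 :> C.
  by rewrite mulf_neq0 ?invr_eq0 // pnatr_eq0 -lt0n.
apply: tensor_rank_le_widen (_ : 1 + s * (s.-1 * (s.-2 * 1)) <= _)%N _; first lia.
apply: eq_tensor_rank_le (MM_eq_ketbra_diff_cycles sum_w sum_ketbra_w kappa_neq0) _.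
apply: eq_tensor_rank_le (tensor_rank_leD (tensor_rank_le_rank1 _ _ _)
  (tensor_rank_leZ (- (s%:R / n%:R) ^- 3) _)) => [i j k l p q|].
  by rewrite mulNr.
do 3 apply: tensor_rank_le_sum => ?; exact: tensor_rank_le_rank1.
Qed.
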